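(* Let $A,B,C$ be non-collinear points of the real affine plane. Let $A^{+},A^{-}$ be points on line $\overleftrightarrow{BC}$, $B^{+},B^{-}$ points on line $\overleftrightarrow{CA}$, and $C^{+},C^{-}$ points on line $\overleftrightarrow{AB}$, with $A^{+}\neq C$, $A^{-}\neq B$, $B^{+}\neq A$, $B^{-}\neq C$, $C^{+}\neq B$, $C^{-}\neq A$, and define $$a^{+}=\frac{|BA^{+}|}{|A^{+}C|},\quad b^{+}=\frac{|CB^{+}|}{|B^{+}A|},\quad c^{+}=\frac{|AC^{+}|}{|C^{+}B|},\quad a^{-}=\frac{|CA^{-}|}{|A^{-}B|},\quad b^{-}=\frac{|AB^{-}|}{|B^{-}C|},\quad c^{-}=\frac{|BC^{-}|}{|C^{-}A|}.$$ Suppose $(1+b^{-}+c^{+})(1+c^{-}+a^{+})(1+a^{-}+b^{+})\neq 0$, so that the points $X=\overleftrightarrow{BB^{-}}\cap\overleftrightarrow{CC^{+}}$, $Y=\overleftrightarrow{CC^{-}}\cap\overleftrightarrow{AA^{+}}$, $Z=\overleftrightarrow{AA^{-}}\cap\overleftrightarrow{BB^{+}}$ are finite points. Then the signed area of triangle $XYZ$ is $$|\triangle XYZ|=|\triangle ABC|\cdot\frac{a^{+}b^{+}c^{+}+a^{-}b^{-}c^{-}-a^{+}a^{-}-b^{+}b^{-}-c^{+}c^{-}+1}{(1+b^{-}+c^{+})(1+c^{-}+a^{+})(1+a^{-}+b^{+})}.$$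
   Context: Segment lengths are signed: for points on one of the lines $\overleftrightarrow{AB}$, $\overleftrightarrow{BC}$, $\overleftrightarrow{CA}$, $|PQ|$ is positive when $\overrightarrow{PQ}$ points in the direction of $\overrightarrow{AB}$, $\overrightarrow{BC}$, $\overrightarrow{CA}$ respectively; $|PP|/|PQ|=0$. Equivalently, e.g. $A^{+}=(B+a^{+}C)/(1+a^{+})$, $A^{-}=(a^{-}B+C)/(1+a^{-})$ as vectors, and similarly for the others. Triangle areas are signed: $|\triangle XYZ|$ and $|\triangle ABC|$ have the same sign exactly when the vertex paths $X$-$Y$-$Z$-$X$ and $A$-$B$-$C$-$A$ traverse their triangles in the same rotational direction. *)

From Stdlib Require Import Reals Lra.
Open Scope R_scope.

Definition point := (R * R)%type.

Definition vsub (P Q : point) : point := (fst P - fst Q, snd P - snd Q).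
Definition dot (u v : point) : R := fst u * fst v + snd u * snd v.
Definition cross (u v : point) : R := fst u * snd v - snd u * fst v.
Definition vnorm (u : point) : R := sqrt (dot u u).

(* X lies on the line through P and Q (used only with P <> Q). *)
Definition on_line (P Q X : point) : Prop := cross (vsub Q P) (vsub X P) = 0.

(* Signed length |PQ| of a segment on a line whose positive direction is d
   (d <> 0): the coordinate of Q - P along the unit vector d/|d|. *)
Definition slen (d P Q : point) : R := dot (vsub Q P) d / vnorm d.

(* Signed area of triangle PQR (positive iff P-Q-R-P is counterclockwise). *)
Definition sarea (P Q S : point) : R := cross (vsub Q P) (vsub S P) / 2.

From Stdlib Require Import Reals Lra.
Open Scope R_scope.

(* In barycentric coordinates with respect to ABC the cevian feet are
   C+ = (1 : c+ : 0), B- = (1 : 0 : b-), and so on, so the cevian through B and B-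
   consists of the points (1 : s : b-) and the one through C and C+ of the points
   (1 : c+ : t); hence X = (1 : c+ : b-), and cyclically Y = (c- : 1 : a+),
   Z = (b+ : a- : 1).  The area of a triangle of normalized barycentric points is
   |ABC| times the determinant of their coordinates, which is the numerator of the
   formula divided by the three coordinate sums 1 + b- + c+, 1 + c- + a+,
   1 + a- + b+. *)

(* Junk when u + v + w = 0. *)
Definition bary (A B C : point) (u v w : R) : point :=
  ((u * fst A + v * fst B + w * fst C) / (u + v + w),
   (u * snd A + v * snd B + w * snd C) / (u + v + w)).

(* The point X of line PQ with |PX|/|XQ| = k, cf. [on_line_divpt]. *)
Definition divpt (P Q : point) (k : R) : point := bary P Q Q 1 k 0.

Lemma bary_rotate A B C u v w : bary B C A u v w = bary A B C w u v.
Proof. unfold bary; f_equal; f_equal; ring. Qed.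

Lemma sarea_rotate A B C : sarea B C A = sarea A B C.
Proof. unfold sarea, cross, vsub; simpl; lra. Qed.

Lemma sarea_bary A B C u1 v1 w1 u2 v2 w2 u3 v3 w3 :
  u1 + v1 + w1 <> 0 -> u2 + v2 + w2 <> 0 -> u3 + v3 + w3 <> 0 ->
  sarea (bary A B C u1 v1 w1) (bary A B C u2 v2 w2) (bary A B C u3 v3 w3) =
  sarea A B C *
  ((u1 * (v2 * w3 - w2 * v3) - v1 * (u2 * w3 - w2 * u3) + w1 * (u2 * v3 - v2 * u3)) /
   ((u1 + v1 + w1) * (u2 + v2 + w2) * (u3 + v3 + w3))).
Proof. intros. unfold sarea, cross, vsub, bary; simpl. field; auto. Qed.

Lemma sarea_neq0_distinct A B C : sarea A B C <> 0 -> A <> B /\ B <> C /\ C <> A.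
Proof.
  intros H; repeat split; intros ->; apply H; unfold sarea, cross, vsub; simpl; field.
Qed.

Lemma dot_vsub_self_neq0 Q R : Q <> R -> dot (vsub R Q) (vsub R Q) <> 0.
Proof.
  destruct Q as [q1 q2], R as [r1 r2]; unfold dot, vsub; simpl; intros HQR H.
  destruct (Rplus_sqr_eq_0 _ _ H) as [H1 H2].
  apply HQR; f_equal; lra.
Qed.

Lemma on_line_sym Q R P : on_line Q R P -> on_line R Q P.
Proof.
  unfold on_line; intros H.
  transitivity (- cross (vsub R Q) (vsub P Q)); [unfold cross, vsub; simpl; ring|].
  rewrite H; ring.
Qed.

Lemma on_line_param Q R P : Q <> R -> on_line Q R P ->
  exists t, P = (fst Q + t * (fst R - fst Q), snd Q + t * (snd R - snd Q)).
Proof.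
  intros HQR HP; pose proof (dot_vsub_self_neq0 _ _ HQR) as Hd.
  exists (dot (vsub P Q) (vsub R Q) / dot (vsub R Q) (vsub R Q)).
  destruct Q as [q1 q2], R as [r1 r2], P as [p1 p2].
  unfold on_line, cross, dot, vsub in *; simpl in *.
  f_equal; apply (Rmult_eq_reg_r ((r1 - q1) * (r1 - q1) + (r2 - q2) * (r2 - q2))); auto;
    field_simplify; auto.
  (* Each coordinate defect is a multiple of the cross product, which is 0. *)
  - assert (E : (r2 - q2) * ((r1 - q1) * (p2 - q2) - (r2 - q2) * (p1 - q1)) = 0)
      by (rewrite HP; ring).
    lra.
  - assert (E : (r1 - q1) * ((r1 - q1) * (p2 - q2) - (r2 - q2) * (p1 - q1)) = 0)
      by (rewrite HP; ring).
    lra.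
Qed.

Lemma slen_ratio d Q R t : dot (vsub R Q) d <> 0 -> t <> 1 ->
  let P := (fst Q + t * (fst R - fst Q), snd Q + t * (snd R - snd Q)) in
  slen d Q P / slen d P R = t / (1 - t).
Proof.
  intros Hd Ht P.
  assert (Hn : vnorm d <> 0).
  { unfold vnorm; intros Hs; apply sqrt_eq_0 in Hs.
    - apply Hd; destruct d as [d1 d2]; unfold dot in *; simpl in *.
      destruct (Rplus_sqr_eq_0 _ _ Hs) as [H1 H2]; rewrite H1, H2; ring.
    - unfold dot; apply Rplus_le_le_0_compat; apply Rle_0_sqr. }
  assert (HRP : dot (vsub R P) d = (1 - t) * dot (vsub R Q) d)
    by (unfold P, dot, vsub; simpl; ring).
  assert (HPQ : dot (vsub P Q) d = t * dot (vsub R Q) d)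
    by (unfold P, dot, vsub; simpl; ring).
  unfold slen; rewrite HRP, HPQ; field; repeat split; auto; lra.
Qed.

Lemma on_line_divpt d Q R P : dot (vsub R Q) d <> 0 -> on_line Q R P -> P <> R ->
  let k := slen d Q P / slen d P R in 1 + k <> 0 /\ P = divpt Q R k.
Proof.
  intros Hd HP HPR k.
  assert (HQR : Q <> R).
  { intros <-; apply Hd; unfold dot, vsub; simpl; ring. }
  destruct (on_line_param Q R P HQR HP) as [t ->].
  assert (Ht : t <> 1).
  { intros ->; apply HPR; destruct R; simpl; f_equal; ring. }
  assert (Hk : k = t / (1 - t)) by exact (slen_ratio d Q R t Hd Ht).
  assert (Hk1 : 1 + k = / (1 - t)) by (rewrite Hk; field; lra).
  split.
  - rewrite Hk1; apply Rinv_neq_0_compat; lra.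
  - unfold divpt, bary; simpl; rewrite Hk; f_equal; field; split; lra.
Qed.

Lemma on_line_divpt_fwd Q R P : Q <> R -> on_line Q R P -> P <> R ->
  let k := slen (vsub R Q) Q P / slen (vsub R Q) P R in 1 + k <> 0 /\ P = divpt Q R k.
Proof. intros HQR; apply on_line_divpt, dot_vsub_self_neq0, HQR. Qed.

Lemma on_line_divpt_bwd Q R P : Q <> R -> on_line Q R P -> P <> Q ->
  let k := slen (vsub R Q) R P / slen (vsub R Q) P Q in 1 + k <> 0 /\ P = divpt R Q k.
Proof.
  intros HQR HP; apply on_line_divpt; [|now apply on_line_sym].
  replace (dot (vsub Q R) (vsub R Q)) with (- dot (vsub R Q) (vsub R Q))
    by (unfold dot, vsub; simpl; ring).
  apply Ropp_neq_0_compat, dot_vsub_self_neq0, HQR.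
Qed.

Lemma cross_eq0_of_independent u v w : cross u v <> 0 ->
  cross u w = 0 -> cross v w = 0 -> w = (0, 0).
Proof.
  destruct u as [u1 u2], v as [v1 v2], w as [w1 w2]; unfold cross; simpl.
  intros Huv Hu Hv.
  f_equal; apply (Rmult_eq_reg_l (u1 * v2 - u2 * v1)); auto.
  - transitivity (v1 * (u1 * w2 - u2 * w1) - u1 * (v1 * w2 - v2 * w1)); [ring|].
    rewrite Hu, Hv; ring.
  - transitivity (v2 * (u1 * w2 - u2 * w1) - u2 * (v1 * w2 - v2 * w1)); [ring|].
    rewrite Hu, Hv; ring.
Qed.

Lemma lines_meet_unique Q R S T X Y : cross (vsub R Q) (vsub T S) <> 0 ->
  on_line Q R X -> on_line S T X -> on_line Q R Y -> on_line S T Y -> X = Y.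
Proof.
  unfold on_line; intros Hind HX1 HX2 HY1 HY2.
  assert (H : vsub X Y = (0, 0)).
  { apply (cross_eq0_of_independent _ _ _ Hind).
    - transitivity (cross (vsub R Q) (vsub X Q) - cross (vsub R Q) (vsub Y Q)).
      + unfold cross, vsub; simpl; ring.
      + rewrite HX1, HY1; ring.
    - transitivity (cross (vsub T S) (vsub X S) - cross (vsub T S) (vsub Y S)).
      + unfold cross, vsub; simpl; ring.
      + rewrite HX2, HY2; ring. }
  destruct X as [x1 x2], Y as [y1 y2]; unfold vsub in H; simpl in H.
  injection H as H1 H2; f_equal; lra.
Qed.

Lemma cross_cevians A B C b c : 1 + b <> 0 -> 1 + c <> 0 ->
  cross (vsub (divpt A C b) B) (vsub (divpt A B c) C) =
  (1 + b + c) / ((1 + b) * (1 + c)) * cross (vsub B A) (vsub C A).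
Proof.
  intros Hb Hc; unfold divpt, bary, cross, vsub; simpl.
  field; auto.
Qed.

Lemma cevians_meet A B C b c X : sarea A B C <> 0 ->
  1 + b <> 0 -> 1 + c <> 0 -> 1 + b + c <> 0 ->
  on_line B (divpt A C b) X -> on_line C (divpt A B c) X ->
  X = bary A B C 1 c b.
Proof.
  intros HS Hb Hc Hbc HX1 HX2.
  assert (HD : cross (vsub B A) (vsub C A) <> 0).
  { contradict HS; unfold sarea; rewrite HS; field. }
  apply (lines_meet_unique B (divpt A C b) C (divpt A B c)); auto.
  - rewrite cross_cevians by auto.
    apply Rmult_integral_contrapositive_currified; auto.
    unfold Rdiv; apply Rmult_integral_contrapositive_currified; auto.
    apply Rinv_neq_0_compat, Rmult_integral_contrapositive_currified; auto.
  - unfold on_line, divpt, bary, cross, vsub; simpl; field; lra.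
  - unfold on_line, divpt, bary, cross, vsub; simpl; field; lra.
Qed.

Theorem theorem5 (A B C Ap Am Bp Bm Cp Cm X Y Z : point) :
  sarea A B C <> 0 ->
  on_line B C Ap -> on_line B C Am ->
  on_line C A Bp -> on_line C A Bm ->
  on_line A B Cp -> on_line A B Cm ->
  Ap <> C -> Am <> B -> Bp <> A -> Bm <> C -> Cp <> B -> Cm <> A ->
  let ap := slen (vsub C B) B Ap / slen (vsub C B) Ap C in
  let bp := slen (vsub A C) C Bp / slen (vsub A C) Bp A in
  let cp := slen (vsub B A) A Cp / slen (vsub B A) Cp B in
  let am := slen (vsub C B) C Am / slen (vsub C B) Am B in
  let bm := slen (vsub A C) A Bm / slen (vsub A C) Bm C in
  let cm := slen (vsub B A) B Cm / slen (vsub B A) Cm A in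
  (1 + bm + cp) * (1 + cm + ap) * (1 + am + bp) <> 0 ->
  on_line B Bm X -> on_line C Cp X ->
  on_line C Cm Y -> on_line A Ap Y ->
  on_line A Am Z -> on_line B Bp Z ->
  sarea X Y Z =
    sarea A B C *
    ((ap * bp * cp + am * bm * cm - ap * am - bp * bm - cp * cm + 1) /
     ((1 + bm + cp) * (1 + cm + ap) * (1 + am + bp))).
Proof.
  intros HS HAp HAm HBp HBm HCp HCm nAp nAm nBp nBm nCp nCm ap bp cp am bm cm
    Hden HX1 HX2 HY1 HY2 HZ1 HZ2.
  destruct (sarea_neq0_distinct A B C HS) as [nAB [nBC nCA]].
  destruct (on_line_divpt_fwd B C Ap nBC HAp nAp) as [Hap EAp]; fold ap in Hap, EAp.
  destruct (on_line_divpt_fwd C A Bp nCA HBp nBp) as [Hbp EBp]; fold bp in Hbp, EBp.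
  destruct (on_line_divpt_fwd A B Cp nAB HCp nCp) as [Hcp ECp]; fold cp in Hcp, ECp.
  destruct (on_line_divpt_bwd B C Am nBC HAm nAm) as [Ham EAm]; fold am in Ham, EAm.
  destruct (on_line_divpt_bwd C A Bm nCA HBm nBm) as [Hbm EBm]; fold bm in Hbm, EBm.
  destruct (on_line_divpt_bwd A B Cm nAB HCm nCm) as [Hcm ECm]; fold cm in Hcm, ECm.
  destruct (Rmult_neq_0_reg _ _ Hden) as [HXY HZ].
  destruct (Rmult_neq_0_reg _ _ HXY) as [HX HY].
  clearbody ap bp cp am bm cm.
  rewrite EBm in HX1; rewrite ECp in HX2; rewrite ECm in HY1;
    rewrite EAp in HY2; rewrite EAm in HZ1; rewrite EBp in HZ2.
  assert (HS' : sarea B C A <> 0) by (rewrite sarea_rotate; exact HS).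
  assert (HS'' : sarea C A B <> 0) by (rewrite sarea_rotate; exact HS').
  rewrite (cevians_meet A B C bm cp X), (cevians_meet B C A cm ap Y),
    (cevians_meet C A B am bp Z) by assumption.
  rewrite (bary_rotate B C A), !(bary_rotate A B C), sarea_bary by lra.
  f_equal; field; repeat split; assumption.
Qed.
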